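(* Let $\lambda$ be a straight or skew shape with $n$ boxes and let $m\in\mathbb N=\{1,2,\dots\}$. There is a bijection $T[\lambda,\cdot|\cdot]\cup T[\lambda,\div]\to T[\lambda,m]$ which sends a tableau $X$ to the unique tableau in $T[\lambda,m]$ whose positive-content part and negative-content part coincide, as fillings, with those of $X$.
   Context: For a box in row $i$, column $j$ (rows numbered downward) its content is $j-i+\frac12$. A B-Young tableau is a filling of a skew diagram by the $2n$ numbers $\pm1,\dots,\pm n$, one per box, such that $c_{-k}=-c_k$ for $1\le k\le n$, where $c_k$ is the content of the box containing $k$; it is standard if entries increase along rows and down columns. For $m\in\mathbb N$, $T[\lambda,m]$ is the set of standard B-Young tableaux whose positive-content boxes form the shape $\lambda$ and whose smallest positive content is $m+\frac12$ (such a tableau is regarded as determined by its positive-content part). $T[\lambda,\cdot|\cdot]$ (resp. $T[\lambda,\div]$) is the set of standard B-Young tableaux having exactly one box of content $\frac12$ (and hence exactly one of content $-\frac12$) which can be divided by a vertical (resp. horizontal) straight line into two parts of $n$ boxes each, one consisting of boxes of negative content and the other of boxes of positive content, the positive part having shape $\lambda$.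
   Formalization: Every B-Young tableau, in $T[\lambda,m]$ as in $T[\lambda,\cdot|\cdot]$ and $T[\lambda,\div]$, is also centrally symmetric: its negative-content part is the 180° rotation of its positive-content part with all entries negated. The statement above fails without it. *)

(* boxes are pairs of integers (row, column), rows numbered
   downward. The content of box (i,j) is j - i + 1/2; we store the integer
   [diag b = j - i], so content = diag + 1/2.  Positive content <-> diag >= 0;
   the content of the box opposite to content diag+1/2 is (-diag-1)+1/2. *)
From mathcomp Require Import all_boot all_order all_algebra.
Set Implicit Arguments. Unset Strict Implicit. Unset Printing Implicit Defensive.
Import Order.TTheory GRing.Theory Num.Theory.
Local Open Scope ring_scope.

Definition box := (int * int)%type.

Definition diag (b : box) : int := b.2 - b.1.

Definition boxD (b t : box) : box := (b.1 + t.1, b.2 + t.2).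
Definition boxB (b t : box) : box := (b.1 - t.1, b.2 - t.2).

(* A filling: a total function, with value 0 meaning "no box here". *)
Definition filling := box -> int.

Definition in_dom (f : filling) (b : box) : bool := f b != 0.

(* skew diagrams (straight or skew shapes, possibly translated) = finite
   subsets of Z^2 that are convex for the product order *)
Definition skew_convex (D : box -> bool) : Prop :=
  forall a b c : box, D a -> D b ->
    a.1 <= c.1 <= b.1 -> a.2 <= c.2 <= b.2 -> D c.

Definition skew_shape (lam : seq box) : Prop :=
  uniq lam /\ skew_convex (fun b => b \in lam).

Definition B_Young (n : nat) (f : filling) : Prop :=
      (forall b, in_dom f b ->
         exists2 k : nat, (1 <= k <= n)%N & (f b = k%:Z \/ f b = - k%:Z)) /\
      (forall k : nat, (1 <= k <= n)%N ->
         (exists! b, f b = k%:Z) /\ (exists! b, f b = - k%:Z)) /\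
      skew_convex (in_dom f) /\
      (* c_{-k} = - c_k *)
      (forall b b', in_dom f b -> f b' = - f b -> diag b' = - diag b - 1) /\
      (* central symmetry: the negative part is the 180-degree rotation
         of the positive part (the tableau is determined by its positive part) *)
      (exists p q : int, forall b : box, f (p - b.1, q - b.2) = - f b) /\
      (forall i j j' : int, j < j' -> in_dom f (i, j) -> in_dom f (i, j') ->
         f (i, j) < f (i, j')) /\
      (forall i i' j : int, i < i' -> in_dom f (i, j) -> in_dom f (i', j) ->
         f (i, j) < f (i', j)).

Definition pos_part (f : filling) : filling :=
  fun b => if 0 <= diag b then f b else 0.
Definition neg_part (f : filling) : filling :=
  fun b => if diag b < 0 then f b else 0.

Definition same_filling (f g : filling) : Prop :=
  exists t : box, forall b, g (boxD b t) = f b.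

Definition pos_shape (lam : seq box) (f : filling) : Prop :=
  exists t : box, forall b,
    (in_dom f b && (0 <= diag b)) = (boxB b t \in lam).

Definition T_m (lam : seq box) (m : nat) (f : filling) : Prop :=
  [/\ B_Young (size lam) f, pos_shape lam f,
      (exists b, in_dom f b /\ diag b = m%:Z) &
      (forall b, in_dom f b -> 0 <= diag b -> m%:Z <= diag b)].

Definition one_half_unique (f : filling) : Prop :=
  exists! b, in_dom f b /\ diag b = 0.

Definition T_vert (lam : seq box) (f : filling) : Prop :=
  [/\ B_Young (size lam) f, pos_shape lam f, one_half_unique f &
      exists c : int,
        (forall b, in_dom f b -> (diag b < 0) = (b.2 < c)) \/
        (forall b, in_dom f b -> (0 <= diag b) = (b.2 < c))].

Definition T_horiz (lam : seq box) (f : filling) : Prop :=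
  [/\ B_Young (size lam) f, pos_shape lam f, one_half_unique f &
      exists c : int,
        (forall b, in_dom f b -> (diag b < 0) = (b.1 < c)) \/
        (forall b, in_dom f b -> (0 <= diag b) = (b.1 < c))].

Definition same_parts (X Y : filling) : Prop :=
  same_filling (pos_part X) (pos_part Y) /\
  same_filling (neg_part X) (neg_part Y).

(* A standard B-Young tableau is antisymmetric under a half-turn [rot180 p], which
   exchanges the contents c and -c, so it is recovered from its positive part Q and
   the centre p as [symmetrize Q p].  If it has a single box of content 1/2, at
   (a, a), then Q lies in the quadrant north-east of (a, a), and p is 2a or 2a + 1
   according as the entry at (a, a) is positive (the negative part touches it from
   the west) or negative (from the south).  Shifting Q by m columns and taking
   p = 2(a + m) separates the two halves completely and gives a tableau of
   T[lam, m] with the same parts; undoing the shift and choosing p by the sign of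
   the corner entry inverts this, and that sign rule makes the map injective. *)

From mathcomp Require Import all_boot all_order all_algebra zify.
Set Implicit Arguments. Unset Strict Implicit. Unset Printing Implicit Defensive.
Import Order.TTheory GRing.Theory Num.Theory.
Local Open Scope ring_scope.

Definition rot180 (p : int) (b : box) : box := (p - b.1, p - 1 - b.2).

Definition symmetrize (Q : filling) (p : int) : filling := fun b => Q b - Q (rot180 p b).

Definition translate (Q : filling) (t : box) : filling := fun b => Q (boxB b t).

Lemma rot180K p : involutive (rot180 p).
Proof. by case=> i j; rewrite /rot180 /=; congr pair; lia. Qed.

Lemma diag_rot180 p b : diag (rot180 p b) = - diag b - 1.
Proof. by case: b => i j; rewrite /rot180 /diag /=; lia. Qed.

Lemma boxBD b t : boxB (boxD b t) t = b.
Proof. by case: b => i j; rewrite /boxB /boxD /=; congr pair; lia. Qed.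

Lemma boxDB b t : boxD (boxB b t) t = b.
Proof. by case: b => i j; rewrite /boxB /boxD /=; congr pair; lia. Qed.

Lemma symmetrize_rot180 Q p b : symmetrize Q p (rot180 p b) = - symmetrize Q p b.
Proof. by rewrite /symmetrize rot180K opprB. Qed.

Section NonnegSupport.

Variables (Q : filling) (p : int).
Hypothesis Q_nonneg : forall b, in_dom Q b -> 0 <= diag b.

Lemma nonneg_eq0 b : diag b < 0 -> Q b = 0.
Proof. by move=> Hb; apply/eqP; apply: contraTT Hb => /Q_nonneg; lia. Qed.

Lemma nonneg_rot180_eq0 b : in_dom Q b -> Q (rot180 p b) = 0.
Proof. by move=> /Q_nonneg Hb; apply: nonneg_eq0; rewrite diag_rot180; lia. Qed.

Lemma in_dom_symmetrize b :
  in_dom (symmetrize Q p) b = in_dom Q b || in_dom Q (rot180 p b).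
Proof.
rewrite /in_dom /symmetrize; have [Hb|/negPn/eqP ->] /= := boolP (Q b != 0).
  by rewrite (nonneg_rot180_eq0 Hb) subr0 Hb.
by rewrite sub0r oppr_eq0.
Qed.

Lemma symmetrize_pos b : in_dom Q b -> symmetrize Q p b = Q b.
Proof. by move=> Hb; rewrite /symmetrize (nonneg_rot180_eq0 Hb) subr0. Qed.

Lemma symmetrize_neg b : in_dom Q (rot180 p b) -> symmetrize Q p b = - Q (rot180 p b).
Proof.
by move=> /nonneg_rot180_eq0; rewrite rot180K /symmetrize => ->; rewrite sub0r.
Qed.

Lemma pos_part_symmetrize : pos_part (symmetrize Q p) =1 Q.
Proof.
move=> b; rewrite /pos_part /symmetrize; case: ifP => Hb.
  by rewrite [Q (rot180 p b)]nonneg_eq0 ?subr0 // diag_rot180; lia.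
by rewrite nonneg_eq0 //; lia.
Qed.

Lemma neg_part_symmetrize b : neg_part (symmetrize Q p) b = - Q (rot180 p b).
Proof.
rewrite /neg_part /symmetrize; case: ifP => Hb; first by rewrite nonneg_eq0 ?sub0r.
by rewrite [Q (rot180 p b)]nonneg_eq0 ?oppr0 // diag_rot180; lia.
Qed.

Lemma symmetrize_unique (v : int) : v != 0 ->
  (exists! c, Q c = v \/ Q c = - v) -> exists! b, symmetrize Q p b = v.
Proof.
move=> v0 [c [Qc Qc_uniq]].
have from_Q b : symmetrize Q p b = v -> Q b = v \/ Q (rot180 p b) = - v.
  move=> Hb; have : in_dom (symmetrize Q p) b by rewrite /in_dom Hb.
  rewrite in_dom_symmetrize => /orP [H|H]; first by left; rewrite -Hb symmetrize_pos.
  by right; rewrite -Hb symmetrize_neg ?opprK.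
case: Qc => Qc.
  have Hc : in_dom Q c by rewrite /in_dom Qc.
  exists c; split => [|b /from_Q [H|H]].
  - by rewrite symmetrize_pos.
  - exact: Qc_uniq (or_introl H).
  - by move: Qc; rewrite (Qc_uniq _ (or_intror H)) H => /eqP; lia.
have Hc : in_dom Q c by rewrite /in_dom Qc oppr_eq0.
exists (rot180 p c); split => [|b /from_Q [H|H]].
- by rewrite symmetrize_rot180 symmetrize_pos // Qc opprK.
- by move: Qc; rewrite (Qc_uniq _ (or_introl H)) H => /eqP; lia.
- by rewrite (Qc_uniq _ (or_intror H)) rot180K.
Qed.

End NonnegSupport.

Record half_tableau (n : nat) (Q : filling) : Prop := HalfTableau {
  half_nonneg : forall b, in_dom Q b -> 0 <= diag b;
  half_entries : forall b, in_dom Q b ->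
    exists2 k : nat, (1 <= k <= n)%N & (Q b = k%:Z \/ Q b = - k%:Z);
  half_once : forall k : nat, (1 <= k <= n)%N ->
    exists! b, Q b = k%:Z \/ Q b = - k%:Z;
  half_convex : skew_convex (in_dom Q);
  half_row : forall i j j' : int, j < j' -> in_dom Q (i, j) -> in_dom Q (i, j') ->
    Q (i, j) < Q (i, j');
  half_col : forall i i' j : int, i < i' -> in_dom Q (i, j) -> in_dom Q (i', j) ->
    Q (i, j) < Q (i', j) }.

Lemma filling_inj n (f : filling) b b' :
  (forall b, in_dom f b ->
     exists2 k : nat, (1 <= k <= n)%N & (f b = k%:Z \/ f b = - k%:Z)) ->
  (forall k : nat, (1 <= k <= n)%N ->
     (exists! b, f b = k%:Z) /\ (exists! b, f b = - k%:Z)) ->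
  in_dom f b -> f b = f b' -> b = b'.
Proof.
move=> f_entries f_once /f_entries [k /f_once [[c [_ U]] [c' [_ U']]] [] Hb] E.
  by rewrite -(U b Hb); apply: U; rewrite -E.
by rewrite -(U' b Hb); apply: U'; rewrite -E.
Qed.

Section Symmetrization.

Variables (n : nat) (Q : filling) (p : int).
Hypothesis HQ : half_tableau n Q.

Let Q_nonneg := half_nonneg HQ.

Lemma symmetrize_entries b : in_dom (symmetrize Q p) b ->
  exists2 k : nat, (1 <= k <= n)%N &
    (symmetrize Q p b = k%:Z \/ symmetrize Q p b = - k%:Z).
Proof.
rewrite in_dom_symmetrize // => /orP [H|H].
  by rewrite symmetrize_pos //; apply: (half_entries HQ).
rewrite symmetrize_neg //; have [k Hk [->|->]] := half_entries HQ H.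
  by exists k => //; right.
by exists k => //; left; rewrite opprK.
Qed.

Lemma symmetrize_once (k : nat) : (1 <= k <= n)%N ->
  (exists! b, symmetrize Q p b = k%:Z) /\ (exists! b, symmetrize Q p b = - k%:Z).
Proof.
move=> Hk; have [c [Qc Qc_uniq]] := half_once HQ Hk.
split; apply: symmetrize_unique => //; try lia; first by exists c.
exists c; rewrite opprK; split; first by case: Qc; [right|left].
by move=> c' Hc'; apply: Qc_uniq; case: Hc'; [right|left].
Qed.

Lemma B_Young_symmetrize :
  skew_convex (in_dom (symmetrize Q p)) ->
  (forall i j j' : int, j < j' -> in_dom Q (rot180 p (i, j)) -> in_dom Q (i, j') ->
     - Q (rot180 p (i, j)) < Q (i, j')) ->
  (forall i i' j : int, i < i' -> in_dom Q (i, j) -> in_dom Q (rot180 p (i', j)) ->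
     Q (i, j) < - Q (rot180 p (i', j))) ->
  B_Young n (symmetrize Q p).
Proof.
move=> convex row_mixed col_mixed.
have dom := in_dom_symmetrize p Q_nonneg.
split; first exact: symmetrize_entries.
split; first exact: symmetrize_once.
split => //; split.
  move=> b b' Hb Hb'; suff -> : b' = rot180 p b by rewrite diag_rot180.
  apply: (filling_inj symmetrize_entries symmetrize_once).
    by rewrite /in_dom Hb' oppr_eq0.
  by rewrite symmetrize_rot180.
split; first by exists p, (p - 1) => b; apply: symmetrize_rot180.
split.
  move=> i j j' lt_jj' /[!dom] /orP [H1|H1] /orP [H2|H2].
  - by rewrite !symmetrize_pos //; apply: (half_row HQ).
  - by move: (Q_nonneg H1) (Q_nonneg H2); rewrite diag_rot180 /diag /=; lia.
  - by rewrite symmetrize_neg // symmetrize_pos //; apply: row_mixed.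
  - rewrite !symmetrize_neg // ltrN2.
    by apply: (half_row HQ) => //=; lia.
move=> i i' j lt_ii' /[!dom] /orP [H1|H1] /orP [H2|H2].
- by rewrite !symmetrize_pos //; apply: (half_col HQ).
- by rewrite symmetrize_pos // symmetrize_neg //; apply: col_mixed.
- by move: (Q_nonneg H1) (Q_nonneg H2); rewrite diag_rot180 /diag /=; lia.
- rewrite !symmetrize_neg // ltrN2.
  by apply: (half_col HQ) => //=; lia.
Qed.

End Symmetrization.

Lemma min_diag_quadrant (D : box -> bool) r c : skew_convex D -> D (r, c) ->
  (forall b, D b -> c - r <= diag b) -> forall b, D b -> b.1 <= r /\ c <= b.2.
Proof.
move=> convD Drc min_rc [i j] Dij; have := min_rc _ Dij; rewrite /diag /= => Hij.
split; rewrite leNgt; apply/negP => H.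
  have /min_rc : D (i, c) by apply: (convD (r, c) (i, j)) => //=; lia.
  by rewrite /diag /=; lia.
have /min_rc : D (r, j) by apply: (convD (i, j) (r, c)) => //=; lia.
by rewrite /diag /=; lia.
Qed.

Section Placement.

Variables (n : nat) (Q : filling).
Hypothesis HQ : half_tableau n Q.

Let Q_nonneg := half_nonneg HQ.

Lemma symmetrize_convex p :
  (forall x y z : box, in_dom Q x -> in_dom Q (rot180 p y) ->
     x.1 <= z.1 <= y.1 -> x.2 <= z.2 <= y.2 -> in_dom (symmetrize Q p) z) ->
  (forall x y z : box, in_dom Q (rot180 p x) -> in_dom Q y ->
     x.1 <= z.1 <= y.1 -> x.2 <= z.2 <= y.2 -> in_dom (symmetrize Q p) z) ->
  skew_convex (in_dom (symmetrize Q p)).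
Proof.
have dom := in_dom_symmetrize p Q_nonneg.
move=> pos_neg neg_pos x y z Hx Hy Hz1 Hz2.
move: Hx Hy; rewrite !dom => /orP [Hx|Hx] /orP [Hy|Hy];
  try by [rewrite -dom; apply: (pos_neg x y) | rewrite -dom; apply: (neg_pos x y)].
  by rewrite (half_convex HQ Hx Hy).
apply/orP; right.
by apply: (half_convex HQ Hy Hx); rewrite /rot180 /=; lia.
Qed.

Lemma B_Young_symmetrize_apart (r c p : int) :
  (forall b, in_dom Q b -> b.1 <= r /\ c <= b.2) -> 2 * r < p -> p <= 2 * c ->
  B_Young n (symmetrize Q p).
Proof.
move=> quadrant lt_rp le_pc.
have neg_quadrant b : in_dom Q (rot180 p b) -> p - r <= b.1 /\ b.2 <= p - 1 - c.
  by case: b => i j /quadrant; rewrite /rot180 /=; lia.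
apply: B_Young_symmetrize => //.
- apply: symmetrize_convex => x y z.
    by move=> /quadrant + /neg_quadrant; lia.
  by move=> /neg_quadrant + /quadrant; lia.
- by move=> i j j' _ /neg_quadrant + /quadrant => /=; lia.
- by move=> i i' j _ /quadrant + /neg_quadrant => /=; lia.
Qed.

Lemma B_Young_symmetrize_vert (a : int) : 0 < Q (a, a) ->
  (forall b, in_dom Q b -> b.1 <= a /\ a <= b.2) ->
  B_Young n (symmetrize Q (2 * a)).
Proof.
move=> Qaa_gt0 quadrant; have Qaa : in_dom Q (a, a) by rewrite /in_dom gt_eqF.
have neg_quadrant b : in_dom Q (rot180 (2 * a) b) -> a <= b.1 /\ b.2 <= a - 1.
  by case: b => i j /quadrant; rewrite /rot180 /=; lia.
have row_a_gt0 j : in_dom Q (a, j) -> 0 < Q (a, j).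
  move=> Qaj; have [_ /= le_aj] := quadrant _ Qaj.
  have [lt_aj|le_ja] := ltrP a j; last by have -> : j = a by lia.
  by have := half_row HQ lt_aj Qaa Qaj; lia.
apply: B_Young_symmetrize => //.
- apply: symmetrize_convex => x y z.
    by move=> /quadrant + /neg_quadrant; lia.
  move=> Nx Qy; move: (neg_quadrant _ Nx) (quadrant _ Qy) => Hx Hy Hz1 Hz2.
  rewrite in_dom_symmetrize //; have [le_az|lt_za] := lerP a z.2.
    by rewrite (half_convex HQ Qaa Qy) //=; lia.
  by rewrite orbC (half_convex HQ Qaa Nx) //= /rot180 /=; lia.
- move=> i j j' _ Nij Qij'; have [/= le_ai _] := neg_quadrant _ Nij.
  have [/= le_ia _] := quadrant _ Qij'; have Ei : i = a by lia.
  move: Nij Qij'; rewrite Ei /rot180 /= (_ : 2 * a - a = a); last by lia.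
  by move=> /row_a_gt0 + /row_a_gt0; lia.
- by move=> i i' j _ /quadrant + /neg_quadrant => /=; lia.
Qed.

Lemma B_Young_symmetrize_horiz (a : int) : Q (a, a) < 0 ->
  (forall b, in_dom Q b -> b.1 <= a /\ a <= b.2) ->
  B_Young n (symmetrize Q (2 * a + 1)).
Proof.
move=> Qaa_lt0 quadrant; have Qaa : in_dom Q (a, a) by rewrite /in_dom lt_eqF.
have neg_quadrant b : in_dom Q (rot180 (2 * a + 1) b) -> a + 1 <= b.1 /\ b.2 <= a.
  by case: b => i j /quadrant; rewrite /rot180 /=; lia.
have col_a_lt0 i : in_dom Q (i, a) -> Q (i, a) < 0.
  move=> Qia; have [/= le_ia _] := quadrant _ Qia.
  have [lt_ia|le_ai] := ltrP i a; last by have -> : i = a by lia.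
  by have := half_col HQ lt_ia Qia Qaa; lia.
apply: B_Young_symmetrize => //.
- apply: symmetrize_convex => x y z; last first.
    by move=> /neg_quadrant + /quadrant; lia.
  move=> Qx Ny; move: (quadrant _ Qx) (neg_quadrant _ Ny) => Hx Hy Hz1 Hz2.
  rewrite in_dom_symmetrize //; have [le_za|lt_az] := lerP z.1 a.
    by rewrite (half_convex HQ Qx Qaa) //=; lia.
  by rewrite orbC (half_convex HQ Ny Qaa) //= /rot180 /=; lia.
- by move=> i j j' _ /neg_quadrant + /quadrant => /=; lia.
- move=> i i' j _ Qij Ni'j; have [_ /= le_aj] := quadrant _ Qij.
  have [_ /= le_ja] := neg_quadrant _ Ni'j; have Ej : j = a by lia.
  move: Qij Ni'j; rewrite Ej /rot180 /= (_ : 2 * a + 1 - 1 - a = a); last by lia.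
  by move=> /col_a_lt0 + /col_a_lt0; lia.
Qed.

End Placement.

Definition support_shape (lam : seq box) (Q : filling) : Prop :=
  exists t, forall b, in_dom Q b = (boxB b t \in lam).

Lemma in_dom_pos_part f b : in_dom (pos_part f) b = in_dom f b && (0 <= diag b).
Proof. by rewrite /in_dom /pos_part; case: ifP; rewrite ?andbT ?andbF ?eqxx. Qed.

Lemma pos_part_id f b : 0 <= diag b -> pos_part f b = f b.
Proof. by rewrite /pos_part => ->. Qed.

Lemma support_shape_pos_part lam f :
  pos_shape lam f -> support_shape lam (pos_part f).
Proof. by move=> [t Ht]; exists t => b; rewrite in_dom_pos_part. Qed.

Lemma support_shape_translate lam Q t :
  support_shape lam Q -> support_shape lam (translate Q t).
Proof.
move=> [t0 Ht]; exists (boxD t t0) => b; rewrite /in_dom /translate -/(in_dom _ _) Ht.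
by congr (_ \in lam); case: b => i j; rewrite /boxB /boxD /=; congr pair; lia.
Qed.

Lemma support_shape_convex lam Q :
  skew_shape lam -> support_shape lam Q -> skew_convex (in_dom Q).
Proof.
move=> [_ conv] [t Ht] x y z; rewrite !Ht => Hx Hy Hz1 Hz2.
by apply: (conv _ _ _ Hx Hy); rewrite /boxB /=; lia.
Qed.

Lemma pos_shape_symmetrize lam Q p : (forall b, in_dom Q b -> 0 <= diag b) ->
  support_shape lam Q -> pos_shape lam (symmetrize Q p).
Proof.
move=> Q_nonneg [t Ht]; exists t => b; rewrite -Ht in_dom_symmetrize //.
have [Qb|Qb] /= := boolP (in_dom Q b); first by rewrite Q_nonneg.
have [/Q_nonneg|] //= := boolP (in_dom Q (rot180 p b)); rewrite diag_rot180.
by apply: contraTF; lia.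
Qed.

Lemma B_Young_rot180 n f b0 : B_Young n f -> in_dom f b0 ->
  exists p, forall b, f (rot180 p b) = - f b.
Proof.
move=> [_ [_ [_ [opp_content [[p [q Hpq]] _]]]]] fb0; exists p.
have := opp_content _ _ fb0 (Hpq b0); rewrite /diag /= => E.
by move=> b; rewrite /rot180 (_ : p - 1 = q) //; lia.
Qed.

Section Antisymmetric.

Variables (f : filling) (p : int).
Hypothesis f_rot180 : forall b, f (rot180 p b) = - f b.

Lemma symmetrize_pos_part : f =1 symmetrize (pos_part f) p.
Proof.
move=> b; rewrite /symmetrize /pos_part diag_rot180 f_rot180.
by case: ifP => H; case: ifP => H'; rewrite ?subr0 ?sub0r ?opprK //; lia.
Qed.

Lemma neg_part_rot180 b : neg_part f b = - pos_part f (rot180 p b).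
Proof.
rewrite /neg_part /pos_part diag_rot180 f_rot180.
by case: ifP => H; case: ifP => H'; rewrite ?opprK ?oppr0 //; lia.
Qed.

Lemma pos_part_once n (k : nat) : B_Young n f -> (1 <= k <= n)%N ->
  exists! b, pos_part f b = k%:Z \/ pos_part f b = - k%:Z.
Proof.
move=> [f_entries [f_once _]] Hk; have [[c [fc c_uniq]] _] := f_once _ Hk.
have f_inj := filling_inj f_entries f_once.
have fc0 : in_dom f c by rewrite /in_dom fc; lia.
have pm_k b : f b = k%:Z \/ f b = - k%:Z -> b = c \/ b = rot180 p c.
  case=> fb; first by left; apply/esym/c_uniq.
  by right; apply/f_inj; rewrite ?f_rot180 ?fb ?fc // /in_dom fb; lia.
have [w [Ew dw]] : exists w, (w = c \/ w = rot180 p c) /\ 0 <= diag w.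
  have [dc|dc] := lerP 0 (diag c); first by exists c; split; [left|].
  by exists (rot180 p c); split; [right | rewrite diag_rot180; lia].
exists w; split.
  by rewrite pos_part_id //; case: Ew => ->; rewrite ?f_rot180 fc; [left|right].
move=> b pos_b; have : in_dom (pos_part f) b by rewrite /in_dom; case: pos_b => ->; lia.
rewrite in_dom_pos_part => /andP [_ b_pos]; move: pos_b; rewrite pos_part_id // => /pm_k Eb.
by case: Ew Eb dw b_pos => -> [] -> //; rewrite diag_rot180; lia.
Qed.

Lemma half_tableau_pos_part n lam : B_Young n f -> skew_shape lam ->
  pos_shape lam f -> half_tableau n (pos_part f).
Proof.
move=> f_BY lam_skew f_shape; have BY := f_BY.
case: BY => [f_entries [_ [_ [_ [_ [f_row f_col]]]]]].
have pos_dom b : in_dom (pos_part f) b -> pos_part f b = f b /\ in_dom f b.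
  by rewrite in_dom_pos_part => /andP [fb db]; rewrite pos_part_id.
split.
- by move=> b; rewrite in_dom_pos_part => /andP [].
- by move=> b /pos_dom [-> fb]; apply: f_entries.
- by move=> k; apply: pos_part_once.
- exact: support_shape_convex lam_skew (support_shape_pos_part f_shape).
- by move=> i j j' lt_jj' /pos_dom [-> ?] /pos_dom [-> ?]; apply: f_row.
- by move=> i i' j lt_ii' /pos_dom [-> ?] /pos_dom [-> ?]; apply: f_col.
Qed.

End Antisymmetric.

Lemma half_tableau_translate n Q t : half_tableau n Q ->
  (forall b, in_dom Q b -> 0 <= diag (boxD b t)) -> half_tableau n (translate Q t).
Proof.
move=> [_ Q_entries Q_once Q_convex Q_row Q_col] nonneg_t; split; rewrite /translate.
- by move=> b /nonneg_t; rewrite boxDB.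
- by move=> b /Q_entries.
- move=> k /Q_once [c [Qc c_uniq]]; exists (boxD c t).
  by split=> [|c' /c_uniq ->]; rewrite ?boxBD ?boxDB.
- by move=> x y z Hx Hy Hz1 Hz2; apply: (Q_convex _ _ _ Hx Hy); rewrite /boxB /=; lia.
- by move=> i j j' lt_jj'; apply: Q_row => /=; lia.
- by move=> i i' j lt_ii'; apply: Q_col => /=; lia.
Qed.

Lemma center_parity n f p a : B_Young n f -> (forall b, f (rot180 p b) = - f b) ->
  in_dom f (a, a) -> (forall b, in_dom f b -> diag b = 0 -> b = (a, a)) ->
  (p = 2 * a /\ 0 < f (a, a)) \/ (p = 2 * a + 1 /\ f (a, a) < 0).
Proof.
move=> [_ [_ [f_convex [_ [_ [f_row f_col]]]]]] f_rot180 faa center_uniq.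
have faa' : in_dom f (rot180 p (a, a)) by rewrite /in_dom f_rot180 oppr_eq0.
have rot180_center b : in_dom f b -> diag b = -1 -> rot180 p b = (a, a).
  move=> fb db; apply: center_uniq; last by rewrite diag_rot180 db.
  by rewrite /in_dom f_rot180 oppr_eq0.
have [le_p2a|lt_2ap] := lerP p (2 * a).
  have fW : in_dom f (a, a - 1) by apply: (f_convex _ _ _ faa' faa) => /=; lia.
  have EW := rot180_center _ fW (ltac:(rewrite /diag /=; lia)).
  have Ep : p = 2 * a by move: EW; rewrite /rot180 => -[]; lia.
  have := f_rot180 (a, a - 1); rewrite EW.
  have : f (a, a - 1) < f (a, a) by apply: f_row => //; lia.
  by move=> *; left; split; lia.
have fS : in_dom f (a + 1, a) by apply: (f_convex _ _ _ faa faa') => /=; lia.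
have ES := rot180_center _ fS (ltac:(rewrite /diag /=; lia)).
have Ep : p = 2 * a + 1 by move: ES; rewrite /rot180 => -[]; lia.
have := f_rot180 (a + 1, a); rewrite ES.
have : f (a, a) < f (a + 1, a) by apply: f_col => //; lia.
by move=> *; right; split; lia.
Qed.

Lemma same_filling_sym f g : same_filling f g -> same_filling g f.
Proof.
move=> [[t1 t2] Ht]; exists (- t1, - t2) => b; rewrite -Ht.
by congr g; case: b => i j; rewrite /boxD /=; congr pair; lia.
Qed.

Lemma same_filling_trans f g h :
  same_filling f g -> same_filling g h -> same_filling f h.
Proof.
move=> [t Hfg] [u Hgh]; exists (boxD t u) => b; rewrite -Hfg -Hgh.
by congr h; case: b => i j; rewrite /boxD /=; congr pair; lia.
Qed.

Lemma same_parts_sym f g : same_parts f g -> same_parts g f.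
Proof. by case=> [pos neg]; split; apply: same_filling_sym. Qed.

Lemma same_parts_symmetrize_translate X p t p' :
  (forall b, X (rot180 p b) = - X b) ->
  (forall b, in_dom (translate (pos_part X) t) b -> 0 <= diag b) ->
  same_parts X (symmetrize (translate (pos_part X) t) p').
Proof.
move=> X_rot180 Q_nonneg; split.
  by exists t => b; rewrite pos_part_symmetrize // /translate boxBD.
exists (p' - p - t.1, p' - p - t.2) => b.
rewrite neg_part_symmetrize // (neg_part_rot180 X_rot180) /translate.
by congr (- pos_part X _); case: b => i j; rewrite /rot180 /boxB /boxD /=; congr pair; lia.
Qed.

Lemma rot180_boxD p s b : rot180 (p + 2 * s) (boxD b (s, s)) = boxD (rot180 p b) (s, s).
Proof. by case: b => i j; rewrite /rot180 /boxD /=; congr pair; lia. Qed.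

Lemma centred_decomposition lam X : skew_shape lam ->
  B_Young (size lam) X -> pos_shape lam X -> one_half_unique X ->
  exists a p, [/\ forall b, X (rot180 p b) = - X b, in_dom X (a, a),
    (forall b, in_dom (pos_part X) b -> b.1 <= a /\ a <= b.2) &
    (p = 2 * a /\ 0 < X (a, a)) \/ (p = 2 * a + 1 /\ X (a, a) < 0)].
Proof.
move=> lam_skew X_BY X_shape [[a a'] [[Xaa daa] center_uniq]].
have Ea : a' = a by move: daa; rewrite /diag /=; lia.
subst a'.
have [p X_rot180] := B_Young_rot180 X_BY Xaa.
exists a, p; split => //.
- apply: min_diag_quadrant.
  + exact: support_shape_convex lam_skew (support_shape_pos_part X_shape).
  + by rewrite in_dom_pos_part Xaa /diag /= subrr.
  + by move=> b; rewrite in_dom_pos_part subrr => /andP [].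
- by apply: center_parity X_BY X_rot180 Xaa _ => b Xb db; symmetry; apply: center_uniq.
Qed.

Lemma same_filling_of_pos_part lam X X' : skew_shape lam ->
  B_Young (size lam) X -> pos_shape lam X -> one_half_unique X ->
  B_Young (size lam) X' -> pos_shape lam X' -> one_half_unique X' ->
  same_filling (pos_part X) (pos_part X') -> same_filling X X'.
Proof.
move=> lam_skew X_BY X_shape X_half X'_BY X'_shape X'_half [[t1 t2] Ht].
have [a [p [X_rot180 Xaa quad parity]]] :=
  centred_decomposition lam_skew X_BY X_shape X_half.
have [a' [p' [X'_rot180 X'aa quad' parity']]] :=
  centred_decomposition lam_skew X'_BY X'_shape X'_half.
have Paa : pos_part X (a, a) = X (a, a) by rewrite pos_part_id // /diag /= subrr.
have P'aa : pos_part X' (a', a') = X' (a', a') by rewrite pos_part_id // /diag /= subrr.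
have /quad' /= [le1 le2] : in_dom (pos_part X') (boxD (a, a) (t1, t2)).
  by rewrite /in_dom Ht Paa.
have /quad /= [le3 le4] : in_dom (pos_part X) (boxB (a', a') (t1, t2)).
  by rewrite /in_dom -Ht boxDB P'aa.
have Et : (t1, t2) = (a' - a, a' - a) by congr pair; lia.
have X'aa_Xaa : X' (a', a') = X (a, a).
  by rewrite -P'aa -Paa -Ht; congr (pos_part X' _); rewrite /boxD /=; congr pair; lia.
have Ep : p' = p + 2 * (a' - a) by move: parity parity'; rewrite X'aa_Xaa; lia.
exists (t1, t2) => b.
rewrite (symmetrize_pos_part X_rot180) (symmetrize_pos_part X'_rot180).
rewrite /symmetrize Ep Et rot180_boxD.
by rewrite -Et !Ht.
Qed.

Section CentredHalf.

Variables (lam : seq box) (Q : filling) (a : int).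
Hypotheses (Q_half : half_tableau (size lam) Q) (Q_shape : support_shape lam Q).
Hypothesis quadrant : forall b, in_dom Q b -> b.1 <= a /\ a <= b.2.

Let Q_nonneg := half_nonneg Q_half.

Lemma one_half_unique_symmetrize p : in_dom Q (a, a) -> one_half_unique (symmetrize Q p).
Proof.
move=> Qaa; exists (a, a); split.
  by rewrite in_dom_symmetrize // Qaa /diag /= subrr.
move=> b []; rewrite in_dom_symmetrize // => /orP [/quadrant|/Q_nonneg].
  by case: b => i j /= quad; rewrite /diag /= => db; congr pair; lia.
by rewrite diag_rot180 => + db; rewrite db.
Qed.

Lemma T_vert_symmetrize : 0 < Q (a, a) -> T_vert lam (symmetrize Q (2 * a)).
Proof.
move=> Qaa_gt0; have Qaa : in_dom Q (a, a) by rewrite /in_dom gt_eqF.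
split.
- exact: B_Young_symmetrize_vert.
- exact: pos_shape_symmetrize.
- exact: one_half_unique_symmetrize.
- exists a; left => b; rewrite in_dom_symmetrize // => /orP [] Hb;
    move: (Q_nonneg Hb) (quadrant Hb); case: b {Hb} => i j;
    rewrite /rot180 /diag /= => ? ?; apply/idP/idP; lia.
Qed.

Lemma T_horiz_symmetrize : Q (a, a) < 0 -> T_horiz lam (symmetrize Q (2 * a + 1)).
Proof.
move=> Qaa_lt0; have Qaa : in_dom Q (a, a) by rewrite /in_dom lt_eqF.
split.
- exact: B_Young_symmetrize_horiz.
- exact: pos_shape_symmetrize.
- exact: one_half_unique_symmetrize.
- exists (a + 1); right => b; rewrite in_dom_symmetrize // => /orP [] Hb;
    move: (Q_nonneg Hb) (quadrant Hb); case: b {Hb} => i j;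
    rewrite /rot180 /diag /= => ? ?; apply/idP/idP; lia.
Qed.

End CentredHalf.

Lemma T_m_image lam (m : nat) X : skew_shape lam -> (0 < m)%N ->
  B_Young (size lam) X -> pos_shape lam X -> one_half_unique X ->
  exists Y, T_m lam m Y /\ same_parts X Y.
Proof.
move=> lam_skew m_gt0 X_BY X_shape X_half.
have [a [p [X_rot180 Xaa quadrant _]]] :=
  centred_decomposition lam_skew X_BY X_shape X_half.
have P_half := half_tableau_pos_part X_rot180 X_BY lam_skew X_shape.
pose Q := translate (pos_part X) (0, m%:Z).
have Q_diag_ge_m b : in_dom Q b -> m%:Z <= diag b.
  by rewrite /in_dom /Q /translate => /quadrant; case: b => i j; rewrite /diag /=; lia.
have Q_half : half_tableau (size lam) Q.
  by apply: half_tableau_translate => // b /quadrant; case: b => i j; rewrite /diag /=; lia.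
have Q_corner : in_dom Q (a, a + m%:Z).
  rewrite /in_dom /Q /translate /boxB /= subr0 addrK -/(in_dom _ _).
  by rewrite in_dom_pos_part Xaa /diag /= subrr.
exists (symmetrize Q (2 * (a + m%:Z))); split; last first.
  by apply: same_parts_symmetrize_translate => // b /Q_diag_ge_m; lia.
split.
- apply: (B_Young_symmetrize_apart Q_half (r := a) (c := a + m%:Z)); last by lia.
  + by move=> b /(quadrant (boxB b _)) /=; lia.
  + by lia.
- exact: pos_shape_symmetrize (half_nonneg Q_half)
    (support_shape_translate _ (support_shape_pos_part X_shape)).
- exists (a, a + m%:Z); split; last by rewrite /diag /=; lia.
  by rewrite in_dom_symmetrize ?Q_corner //; exact: half_nonneg Q_half.
- move=> b; rewrite in_dom_symmetrize; last exact: half_nonneg Q_half.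
  by case/orP=> [/Q_diag_ge_m //|/Q_diag_ge_m]; rewrite diag_rot180; lia.
Qed.

Lemma T_m_preimage lam (m : nat) Y : skew_shape lam -> T_m lam m Y ->
  exists X, (T_vert lam X \/ T_horiz lam X) /\ same_parts X Y.
Proof.
move=> lam_skew [Y_BY Y_shape [[r c] [Yrc drc]] min_m].
have {drc} Ec : c = r + m%:Z by move: drc; rewrite /diag /=; lia.
subst c; have [p Y_rot180] := B_Young_rot180 Y_BY Yrc.
have P_half := half_tableau_pos_part Y_rot180 Y_BY lam_skew Y_shape.
pose Q := translate (pos_part Y) (0, - m%:Z).
have Q_nonneg b : in_dom Q b -> 0 <= diag b.
  rewrite /in_dom /Q /translate -/(in_dom _ _) in_dom_pos_part => /andP [Yb db].
  by have := min_m _ Yb db; case: b {Yb db} => i j; rewrite /diag /=; lia.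
have Q_half : half_tableau (size lam) Q.
  apply: half_tableau_translate => // b; rewrite in_dom_pos_part.
  by case/andP=> Yb /(min_m _ Yb); case: b {Yb} => i j; rewrite /diag /boxD /=; lia.
have Qrr : Q (r, r) = Y (r, r + m%:Z).
  by rewrite /Q /translate /boxB /= subr0 opprK pos_part_id // /diag /=; lia.
have quadrant : forall b, in_dom Q b -> b.1 <= r /\ r <= b.2.
  apply: min_diag_quadrant; first exact: half_convex Q_half.
    by rewrite /in_dom Qrr.
  by move=> b /Q_nonneg; rewrite subrr.
have Q_shape := support_shape_translate (0, - m%:Z) (support_shape_pos_part Y_shape).
have XY p' : same_parts (symmetrize Q p') Y.
  by apply/same_parts_sym/same_parts_symmetrize_translate.
have [Qrr_gt0|Qrr_le0] := ltrP 0 (Q (r, r)).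
  by exists (symmetrize Q (2 * r)); split; [left; apply: T_vert_symmetrize|].
exists (symmetrize Q (2 * r + 1)); split => //; right; apply: T_horiz_symmetrize => //.
have : Q (r, r) != 0 by rewrite Qrr.
by move: Qrr_le0; lia.
Qed.

Lemma T_vert_or_horiz_props lam X : T_vert lam X \/ T_horiz lam X ->
  [/\ B_Young (size lam) X, pos_shape lam X & one_half_unique X].
Proof. by case=> -[]. Qed.

Theorem proposition6p8 (lam : seq box) (m : nat) :
  skew_shape lam -> (0 < m)%N ->
  let U := fun X => T_vert lam X \/ T_horiz lam X in
  [/\ (* the map is defined: every X has an image *)
      (forall X, U X -> exists Y, T_m lam m Y /\ same_parts X Y),
      (* the image is unique (elements of T[lam,m] are determined by their
         positive-content part) *)
      (forall X Y Y', U X -> T_m lam m Y -> T_m lam m Y' ->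
         same_parts X Y -> same_parts X Y' ->
         same_filling (pos_part Y) (pos_part Y')),
      (* injectivity (tableaux up to translation) *)
      (forall X X' Y Y', U X -> U X' -> T_m lam m Y -> T_m lam m Y' ->
         same_parts X Y -> same_parts X' Y' ->
         same_filling (pos_part Y) (pos_part Y') -> same_filling X X') &
      (* surjectivity *)
      (forall Y, T_m lam m Y -> exists X, U X /\ same_parts X Y)].
Proof.
move=> lam_skew m_gt0 U; rewrite {}/U; split.
- by move=> X /T_vert_or_horiz_props [X_BY X_shape X_half]; apply: T_m_image.
- move=> X Y Y' _ _ _ [XY _] [XY' _].
  exact: same_filling_trans (same_filling_sym XY) XY'.
- move=> X X' Y Y' /T_vert_or_horiz_props [X_BY X_shape X_half]
    /T_vert_or_horiz_props [X'_BY X'_shape X'_half] _ _ [XY _] [X'Y' _] YY'.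
  apply: same_filling_of_pos_part lam_skew X_BY X_shape X_half X'_BY X'_shape X'_half _.
  exact: same_filling_trans XY (same_filling_trans YY' (same_filling_sym X'Y')).
- by move=> Y; apply: T_m_preimage.
Qed.
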